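(* For an integer $N\geq2$ let $$L^\star(N)=\max\Big\{(N_1+1)(N_3(N_1+N_2)+3N_2+3)-5\ :\ N_1,N_3\in\mathbb{N},\ N_2\in\mathbb{N}_+,\ 2(2N_1+N_2)+N_3(N_1+1)=N\Big\}.$$ Then $\lim_{N\to\infty}\frac{N^2}{2(2L^\star(N)+1)}=\frac{23}{12}$.
   Context: $L^\star(N)$ is the largest aperture of a Kl{\o}ve array (parameters $N_1,N_2,N_3$) with $N$ sensors; since this array has a contiguous sum co-array, its number of contiguous degrees of freedom is $H=2L^\star(N)+1$ and the asymptotic redundancy is $R_\infty=\lim_{N\to\infty}N^2/(2H)$. *)

From mathcomp Require Import all_boot all_order all_algebra.
From mathcomp Require Import all_classical all_reals all_analysis.
Set Implicit Arguments. Unset Strict Implicit. Unset Printing Implicit Defensive.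

Definition klove_adm (N N1 N2 N3 : nat) : bool :=
  (0 < N2) && (2 * (2 * N1 + N2) + N3 * (N1 + 1) == N).

(* Aperture (N1+1)(N3(N1+N2)+3N2+3) - 5; the subtracted quantity is >= 6
   whenever N2 >= 1, so the truncated subtraction is exact. *)
Definition klove_aperture (N1 N2 N3 : nat) : nat :=
  (N1 + 1) * (N3 * (N1 + N2) + 3 * N2 + 3) - 5.

(* L*(N): maximum over admissible parameters. Every admissible parameter is
   bounded by N, so ranging over 'I_(N+1)^3 covers all of them. *)
Definition Lstar (N : nat) : nat :=
  \max_(p : 'I_(N.+1) * 'I_(N.+1) * 'I_(N.+1) | klove_adm N p.1.1 p.1.2 p.2)
     klove_aperture p.1.1 p.1.2 p.2.

From mathcomp Require Import all_boot all_order all_algebra.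
From mathcomp Require Import all_classical all_reals all_analysis.
From mathcomp Require Import zify ring lra.
Set Implicit Arguments. Unset Strict Implicit. Unset Printing Implicit Defensive.
Import Order.TTheory GRing.Theory Num.Theory numFieldNormedType.Exports.

(* The limit N^2 / (2(2 L*(N) + 1)) --> 23/12 follows from the two-sided
   estimate   3 N^2 - 23*305 <= 23 L*(N) <= 3 (N + 6)^2   (N >= 69).
   Upper bound: with A = N1+1, B = N2+1, y = N3 (N1+1) we have N + 6 = 4A+2B+y
   and aperture + 5 <= y (A+B) + 3AB; the quadratic form
   3 (4A+2B+y)^2 - 23 (y(A+B) + 3AB) is a sum of squares, so every admissible
   aperture is at most 3 (N+6)^2 / 23.
   Lower bound: the explicit parameters N3 = 9, N1 ~ N/23 (adjusted by parity
   so that N2 is an integer) are admissible, and with N = 23 N1 + e, -23 <= e <= 22,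
   their aperture is 3N^2/23 + O(N1) with a nonnegative linear error term. *)

Section PolynomialInequalities.
Local Open Scope ring_scope.

Lemma aperture_form_sos (R : comPzRingType) (A B y : R) :
  12 * (3 * (4 * A + 2 * B + y) ^+ 2 - 23 * (y * (A + B) + 3 * A * B)) =
  (6 * y + A - 11 * B) ^+ 2 + 23 * (5 * A - B) ^+ 2.
Proof. by ring. Qed.

Lemma aperture_form_le (R : realDomainType) (A B y : R) :
  23 * (y * (A + B) + 3 * A * B) <= 3 * (4 * A + 2 * B + y) ^+ 2.
Proof.
rewrite -subr_ge0 -(pmulr_rge0 _ (ltr0Sn R 11)) aperture_form_sos.
by rewrite addr_ge0 ?sqr_ge0 // mulr_ge0 ?sqr_ge0.
Qed.

(* Certificate behind the lower bound: the aperture of the parameters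
   (n, N2, 9) with N = 23 n + e, written in terms of n and e. *)
Lemma witness_form_identity (R : comPzRingType) (n e : R) :
  23 * ((n + 1) * (69 * n + 6 * e - 51) - 5 + 305) - 3 * (23 * n + e) ^+ 2 =
  414 * n + 3 * (e + 23) * (22 - e) + 141 * (e + 23) + 966.
Proof. by ring. Qed.

Lemma witness_form_le (R : realDomainType) (n e : R) :
  0 <= n -> -23 <= e <= 22 ->
  3 * (23 * n + e) ^+ 2 <= 23 * ((n + 1) * (69 * n + 6 * e - 51) - 5 + 305).
Proof.
move=> n_ge0 /andP[e_lo e_hi]; rewrite -subr_ge0 witness_form_identity.
have range_prod : 0 <= (e + 23) * (22 - e) by apply: mulr_ge0; lra.
by lra.
Qed.

End PolynomialInequalities.

Lemma aperture_ub (N N1 N2 N3 : nat) : klove_adm N N1 N2 N3 ->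
  23 * klove_aperture N1 N2 N3 <= 3 * (N + 6) ^ 2.
Proof.
rewrite /klove_adm /klove_aperture => /andP[_ /eqP <-].
have aperture_le_form : (N1 + 1) * (N3 * (N1 + N2) + 3 * N2 + 3) <=
    N3 * (N1 + 1) * ((N1 + 1) + (N2 + 1)) + 3 * (N1 + 1) * (N2 + 1).
  by nia.
have := aperture_form_le (Posz (N1 + 1)) (Posz (N2 + 1)) (Posz (N3 * (N1 + 1))).
by lia.
Qed.

Lemma Lstar_ub (N : nat) : 23 * Lstar N <= 3 * (N + 6) ^ 2.
Proof.
apply: (big_ind (fun L => 23 * L <= 3 * (N + 6) ^ 2)) => // [L1 L2|p].
- by rewrite maxnMr geq_max => -> ->.
- exact: aperture_ub.
Qed.

Lemma aperture_le_Lstar (N N1 N2 N3 : nat) : klove_adm N N1 N2 N3 ->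
  klove_aperture N1 N2 N3 <= Lstar N.
Proof.
move=> adm; have /andP[_ /eqP hN] := adm.
have N1_le : N1 < N.+1 by lia.
have N2_le : N2 < N.+1 by lia.
have N3_le : N3 < N.+1 by nia.
exact: (@leq_bigmax_cond _
  (fun p : 'I_N.+1 * 'I_N.+1 * 'I_N.+1 => klove_adm N p.1.1 p.1.2 p.2)
  (fun p => klove_aperture p.1.1 p.1.2 p.2)
  (Ordinal N1_le, Ordinal N2_le, Ordinal N3_le)).
Qed.

(* Near-optimal parameters with N3 = 9: N1 is N/23 or N/23 + 1, whichever
   makes N - 13 N1 - 9 even, and N2 is determined by N. *)
Definition witness_N1 (N : nat) : nat := N %/ 23 + (N + N %/ 23 + 1) %% 2.
Definition witness_N2 (N : nat) : nat := (N - 13 * witness_N1 N - 9) %/ 2.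

Lemma witness_spec (N : nat) : 69 <= N ->
  let N1 := witness_N1 N in let N2 := witness_N2 N in
  [/\ N = 13 * N1 + 2 * N2 + 9, 0 < N2,
      10 * N1 <= 2 * N2 + 32 & 2 * N2 <= 10 * N1 + 13].
Proof. by rewrite /witness_N2 /witness_N1 => N_ge /=; split; lia. Qed.

(* The two range conditions say e = N - 23 N1 lies in [-23, 22]. *)
Lemma witness_aperture_lb (N1 N2 : nat) :
  10 * N1 <= 2 * N2 + 32 -> 2 * N2 <= 10 * N1 + 13 ->
  3 * (13 * N1 + 2 * N2 + 9) ^ 2 <= 23 * (klove_aperture N1 N2 9 + 305).
Proof.
rewrite /klove_aperture => e_lo e_hi.
have e_range : ((-23 : int) <= 2 * Posz N2 + 9 - 10 * Posz N1 <= 22)%R.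
  by apply/andP; split; lia.
have := witness_form_le (ler0n int N1) e_range.
by lia.
Qed.

Lemma Lstar_lb (N : nat) : 69 <= N -> 3 * N ^ 2 <= 23 * (Lstar N + 305).
Proof.
move=> /witness_spec [hN N2_gt0 e_lo e_hi].
have adm : klove_adm N (witness_N1 N) (witness_N2 N) 9.
  by rewrite /klove_adm N2_gt0; apply/eqP; lia.
rewrite {1}hN; apply: leq_trans (witness_aperture_lb e_lo e_hi) _.
by rewrite leq_mul2l leq_add2r (aperture_le_Lstar adm) orbT.
Qed.

Local Open Scope ring_scope.
Local Open Scope classical_set_scope.

Lemma ratio_error_le (R : realFieldType) (x l : R) : 200 <= x ->
  23 * l <= 3 * (x + 6) ^+ 2 -> 3 * x ^+ 2 <= 23 * (l + 305) ->
  `|23 / 12 - x ^+ 2 / (2 * (2 * l + 1))| <= 100 / x.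
Proof.
move=> x_ge hub hlb.
have x_gt0 : 0 < x by lra.
have d_gt0 : 0 < 2 * (2 * l + 1) by nra.
set d := 2 * (2 * l + 1) in d_gt0 *.
have scale_gt0 : 0 < 12 * d * x by nra.
rewrite ler_norml -(ler_pM2r scale_gt0) -[X in _ && X](ler_pM2r scale_gt0) mulNr.
have -> : (23 / 12 - x ^+ 2 / d) * (12 * d * x) = 23 * d * x - 12 * x ^+ 3.
  by field; rewrite gt_eqF.
have -> : (100 / x) * (12 * d * x) = 1200 * d by field; rewrite gt_eqF.
by rewrite /d; apply/andP; split; nra.
Qed.

Lemma cvg_of_rate (R : realType) (u : nat -> R) (l C : R) (n0 : nat) :
  (forall n, (n0 <= n)%N -> `|l - u n| <= C / n%:R) -> u @ \oo --> l.
Proof.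
move=> rate; apply/cvgrPdist_le => eps eps_gt0.
exists (maxn n0 (Num.truncn (C / eps)).+1) => // n /=.
rewrite geq_max => /andP[n0n]; rewrite -(ler_nat R) => n_ge.
apply: le_trans (rate n n0n) _.
have n_gt0 : 0 < n%:R :> R by apply: lt_le_trans n_ge; rewrite ltr0Sn.
rewrite ler_pdivrMr // -ler_pdivrMl // mulrC.
exact/ltW/(lt_le_trans (truncnS_gt _)).
Qed.

Theorem mainTheorem11 (R : realType) :
  (fun N : nat => ((N ^ 2)%N%:R : R) / ((2 * (2 * Lstar N + 1))%N%:R))
    @ \oo --> (23%:R / 12%:R : R).
Proof.
apply: (@cvg_of_rate _ _ _ 100 200) => n n_ge.
rewrite (natrX R n 2) natrM natrD natrM; apply: ratio_error_le.
- by rewrite ler_nat.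
- by move: (Lstar_ub n); rewrite -(ler_nat R) !natrM natrD -expr2.
- have n_ge69 : (69 <= n)%N by apply: leq_trans n_ge.
  by move: (Lstar_lb n_ge69); rewrite -(ler_nat R) !natrM natrD -expr2.
Qed.
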